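(* Let $A$ be a $p$-adically separated $\delta$-ring. If $pA$ is a prime ideal of $A$, then $A$ is $p$-torsion-free.
   Context: All rings are commutative $\mathbb{Z}_{(p)}$-algebras. A $\delta$-ring is a ring $A$ with $\delta:A\to A$ satisfying $\delta(0)=\delta(1)=0$, $\delta(a+b)=\delta(a)+\delta(b)+\frac{a^p+b^p-(a+b)^p}{p}$, $\delta(ab)=a^p\delta(b)+b^p\delta(a)+p\delta(a)\delta(b)$. *)

From HB Require Import structures.
From mathcomp Require Import all_boot all_order all_algebra.
Set Implicit Arguments. Unset Strict Implicit. Unset Printing Implicit Defensive.
Import GRing.Theory.
Local Open Scope ring_scope.

(* A is a Z_(p)-algebra: every integer prime to p is invertible in A. *)
Definition Zp_local_algebra (p : nat) (A : comPzRingType) : Prop :=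
  forall n : nat, coprime n p -> exists y : A, n%:R * y = 1.

(* (a^p + b^p - (a+b)^p)/p, written out as the integral polynomial
   - \sum_{0<i<p} (C(p,i)/p) a^i b^(p-i). *)
Definition delta_add_term (p : nat) (A : comPzRingType) (a b : A) : A :=
  - \sum_(1 <= i < p) (('C(p, i) %/ p)%N)%:R * a ^+ i * b ^+ (p - i).

Definition is_delta_structure (p : nat) (A : comPzRingType) (delta : A -> A) : Prop :=
  [/\ delta 0 = 0, delta 1 = 0,
      forall a b, delta (a + b) = delta a + delta b + delta_add_term p a b
    & forall a b, delta (a * b) =
        a ^+ p * delta b + b ^+ p * delta a + p%:R * delta a * delta b].

Definition in_pA (p : nat) (A : comPzRingType) (x : A) : Prop :=
  exists c : A, x = p%:R * c.

Definition p_adically_separated (p : nat) (A : comPzRingType) : Prop :=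
  forall x : A, (forall n : nat, exists c : A, x = p%:R ^+ n * c) -> x = 0.

Definition pA_prime (p : nat) (A : comPzRingType) : Prop :=
  ~ in_pA p (1 : A) /\
  forall a b : A, in_pA p (a * b) -> in_pA p a \/ in_pA p b.

Definition p_torsion_free (p : nat) (A : comPzRingType) : Prop :=
  forall x : A, p%:R * x = 0 -> x = 0.

From mathcomp Require Import all_boot all_order all_algebra zify ring.
Set Implicit Arguments. Unset Strict Implicit. Unset Printing Implicit Defensive.
Import GRing.Theory.

(* Since delta(n) = (n - n^p)/p for integers n, delta(p) = 1 - p^(p-1) is a unit,
   and delta(p y) = delta(p) y^p + p delta(y).  Applying delta to p^(k+1) x = 0
   gives p^k (delta(p) x^p + p s) = 0, so by induction on k every element killed
   by a power of p has its p-th power, hence itself, in the prime ideal pA.  An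
   element x killed by p is therefore p^n c with p^(n+1) c = 0 for every n, and
   p-adic separatedness forces x = 0. *)

Lemma expSn_binomial (p n : nat) : 0 < p ->
  n.+1 ^ p = n ^ p + \sum_(1 <= i < p) 'C(p, i) * n ^ i + 1.
Proof.
move=> p_gt0; rewrite -add1n expnDn.
rewrite -(big_mkord xpredT (fun i => 'C(p, i) * (1 ^ (p - i) * n ^ i))).
rewrite big_ltn // big_nat_recr //= bin0 binn subnn !exp1n expn0 !mul1n.
under eq_bigr => i _ do rewrite exp1n mul1n.
by rewrite addnC [_ + n ^ p]addnC.
Qed.

Lemma telescope_expn (p n : nat) : 0 < p ->
  \sum_(m < n) \sum_(1 <= i < p) 'C(p, i) * m ^ i + n = n ^ p.
Proof.
move=> p_gt0; elim: n => [|n IHn]; first by rewrite big_ord0 exp0n.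
by rewrite big_ord_recr /= expSn_binomial // -IHn addn1 addnS addnAC.
Qed.

Lemma fermat_quotient_sum (p n : nat) : prime p ->
  \sum_(m < n) \sum_(1 <= i < p) ('C(p, i) %/ p) * m ^ i = (n ^ p - n) %/ p.
Proof.
move=> p_pr; have p_gt0 := prime_gt0 p_pr.
rewrite -(telescope_expn n p_gt0) addnK -[LHS](mulKn _ p_gt0) big_distrr /=.
congr (_ %/ p); apply: eq_bigr => m _; rewrite big_distrr !big_nat /=.
apply: eq_bigr => i /andP[i_gt0 i_ltp].
by rewrite mulnA (mulnC p) divnK // prime_dvd_bin // i_gt0 i_ltp.
Qed.

Lemma coprime_expn_sub1 (p k : nat) : 0 < p -> 0 < k -> coprime (p ^ k - 1) p.
Proof.
move=> p_gt0 k_gt0; rewrite -(coprime_pexpr _ _ k_gt0).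
by rewrite -[X in coprime _ X](@subnK 1 (p ^ k)) ?expn_gt0 ?p_gt0 // addn1 coprimenS.
Qed.

Local Open Scope ring_scope.

Section DeltaRing.

Variables (p : nat) (A : comPzRingType) (delta : A -> A).
Hypotheses (p_pr : prime p) (deltaA : is_delta_structure p delta).

Local Notation P := (p%:R : A).

Lemma delta_natr (n : nat) : delta n%:R = - ((n ^ p - n) %/ p)%:R.
Proof.
have [delta0 delta1 deltaD _] := deltaA.
rewrite -fermat_quotient_sum //; elim: n => [|n IHn]; first by rewrite big_ord0 delta0 oppr0.
rewrite mulrSr deltaD IHn delta1 big_ord_recr /= natrD opprD addr0; congr (_ + _).
rewrite /delta_add_term natr_sum; congr (- _); apply: eq_bigr => i _.
by rewrite expr1n mulr1 natrM natrX.
Qed.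

Lemma delta_p : delta P = 1 - P ^+ p.-1.
Proof.
have p_gt0 := prime_gt0 p_pr.
have fermat_quot_p : ((p ^ p - p) %/ p = p ^ p.-1 - 1)%N.
  by rewrite -[X in (p ^ X)%N](prednK p_gt0) expnS -[X in (_ - X)%N]muln1 -mulnBr mulKn.
by rewrite delta_natr fermat_quot_p natrB ?expn_gt0 ?p_gt0 // natrX opprB.
Qed.

Lemma delta_mul_p (y : A) : delta (P * y) = delta P * y ^+ p + P * delta y.
Proof.
have [_ _ _ deltaM] := deltaA.
by rewrite deltaM delta_p -[X in P ^+ X](prednK (prime_gt0 p_pr)) exprS; ring.
Qed.

Lemma delta_expp_mul (k : nat) (x : A) :
  exists s, delta (P ^+ k.+1 * x) = P ^+ k * (delta P * x ^+ p + P * s).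
Proof.
elim: k => [|k [s IHk]]; first by exists (delta x); rewrite expr1 delta_mul_p expr0 mul1r.
have le_kp : (k.+2 <= k.+1 * p)%N by have := prime_gt1 p_pr; nia.
exists (s + delta P * P ^+ (k.+1 * p - k.+2) * x ^+ p).
rewrite exprS -mulrA delta_mul_p IHk exprMn -exprM.
have -> : P ^+ (k.+1 * p) = P ^+ k.+2 * P ^+ (k.+1 * p - k.+2) by rewrite -exprD subnKC.
by rewrite !exprS; ring.
Qed.

Hypotheses (Zp_local : Zp_local_algebra p A) (pA_pr : pA_prime p A).

Lemma delta_p_unit : exists v, delta P * v = 1.
Proof.
have p_gt0 := prime_gt0 p_pr.
have pred_gt0 : (0 < p.-1)%N by rewrite -subn1 subn_gt0 prime_gt1.
have [y] := Zp_local (coprime_expn_sub1 p_gt0 pred_gt0).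
rewrite natrB ?expn_gt0 ?p_gt0 // natrX => y_inv.
by exists (- y); rewrite delta_p -[RHS]y_inv; ring.
Qed.

Lemma in_pA_of_expr (x : A) (n : nat) : in_pA p (x ^+ n.+1) -> in_pA p x.
Proof.
elim: n => [|n IHn]; first by rewrite expr1.
by rewrite exprS => /pA_pr.2 [//|/IHn].
Qed.

Lemma in_pA_of_expp_mul_eq0 (k : nat) (x : A) : P ^+ k * x = 0 -> in_pA p x.
Proof.
elim: k x => [|k IHk] x; first by rewrite expr0 mul1r => ->; exists 0; rewrite mulr0.
have [delta0 _ _ _] := deltaA.
move=> px0; have [s] := delta_expp_mul k x.
rewrite px0 delta0 => /esym/IHk [c pA_eq].
have [v uv] := delta_p_unit.
apply: (@in_pA_of_expr _ p.-1); rewrite prednK ?prime_gt0 //.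
have xp_eq : x ^+ p = v * (delta P * x ^+ p + P * s) - P * (v * s).
  by rewrite mulrDr mulrA [v * _]mulrC uv mul1r mulrCA addrK.
by exists (v * (c - s)); rewrite xp_eq pA_eq; ring.
Qed.

Lemma p_torsion_infinitely_divisible (x : A) :
  P * x = 0 -> forall n, exists c, x = P ^+ n * c.
Proof.
move=> px0 n; suff [c [-> _]] : exists c, x = P ^+ n * c /\ P ^+ n.+1 * c = 0 by exists c.
elim: n => [|n [c [-> pc0]]]; first by exists x; rewrite expr0 mul1r expr1.
have [c' c_eq] := in_pA_of_expp_mul_eq0 pc0.
by exists c'; rewrite c_eq -pc0 c_eq !exprS; split; ring.
Qed.

End DeltaRing.

Theorem lemma3p2 (p : nat) (A : comPzRingType) (delta : A -> A) :
  prime p -> Zp_local_algebra p A -> is_delta_structure p delta ->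
  p_adically_separated p A -> pA_prime p A -> p_torsion_free p A.
Proof.
move=> p_pr Zp_local deltaA separated pA_pr x px0.
exact/separated/(p_torsion_infinitely_divisible p_pr deltaA Zp_local pA_pr px0).
Qed.
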